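(* Let $k$ be a field and $Y,Z\in\mathcal S_{\alpha,\gamma}^\beta(k)$. Then $Y\leq_{\rm ext}Z$ holds if and only if there exist finite-dimensional $\Lambda$-modules $M_i,U_i,V_i$ ($1\le i\le s$) and $M_{s+1}$, and short exact sequences $0\to U_i\to M_i\to V_i\to 0$ of $\Lambda$-modules, such that $Y\cong M_1$, $U_i\oplus V_i\cong M_{i+1}$ for $1\le i\le s$, and $Z\cong M_{s+1}$, for some natural number $s$.
   Context: $\Lambda=\begin{pmatrix}k[T]&k[T]\\0&k[T]\end{pmatrix}$; finite-dimensional right $\Lambda$-modules are identified with triples $(X_1,X_2,h)$ of finite-dimensional $k[T]$-modules and a $k[T]$-homomorphism $h:X_1\to X_2$, morphisms being pairs $(\psi_1,\psi_2)$ of $k[T]$-maps with $h'\psi_1=\psi_2h$. For a partition $\alpha$ let $N_\alpha=\bigoplus_ik[T]/(T^{\alpha_i})$. $\mathcal S(k)$ is the full subcategory of $\Lambda$-modules $(N_\alpha,N_\beta,f)$ with $\alpha,\beta$ partitions and $f$ injective; $\mathcal S_{\alpha,\gamma}^\beta(k)$ consists of those with the given $\alpha,\beta$ and $\operatorname{Coker}f\cong N_\gamma$. $Y\leq_{\rm ext}Z$ means: there exist objects $M_i,U_i,V_i$ in $\mathcal S(k)$ and short exact sequences $0\to U_i\to M_i\to V_i\to0$ in $\mathcal S(k)$ (i.e. of $\Lambda$-modules with all terms in $\mathcal S(k)$) with $Y\cong M_1$, $U_i\oplus V_i\cong M_{i+1}$ for $1\le i\le s$, and $Z\cong M_{s+1}$,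 for some $s$. *)

(* Finite-dimensional k[T]-modules are modelled as pairs
   (n, A) with A : 'M[k]_n the action of T (row-vector convention: x |-> x *m A). *)
From mathcomp Require Import all_boot all_order all_algebra.
Set Implicit Arguments. Unset Strict Implicit. Unset Printing Implicit Defensive.
Import GRing.Theory.
Local Open Scope ring_scope.

(* A (finite-dimensional) triple (X1, X2, h): carriers k^d1, k^d2, T-actions T1, T2,
   and h : X1 -> X2 (x |-> x *m hm). *)
Record lmod (k : fieldType) := LMod {
  d1 : nat; d2 : nat;
  T1 : 'M[k]_d1; T2 : 'M[k]_d2;
  hm : 'M[k]_(d1, d2) }.
Arguments LMod {k d1 d2}.

(* h is k[T]-linear, so the triple is a Lambda-module *)
Definition is_lmod (k : fieldType) (X : lmod k) : Prop :=
  T1 X *m hm X = hm X *m T2 X.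

Definition is_hom (k : fieldType) (X Y : lmod k)
    (p1 : 'M[k]_(d1 X, d1 Y)) (p2 : 'M[k]_(d2 X, d2 Y)) : Prop :=
  [/\ T1 X *m p1 = p1 *m T1 Y, T2 X *m p2 = p2 *m T2 Y & hm X *m p2 = p1 *m hm Y].

Arguments is_hom {k} X Y p1 p2.

Definition iso (k : fieldType) (X Y : lmod k) : Prop :=
  exists p1 p2 q1 q2, [/\ is_hom X Y p1 p2, is_hom Y X q1 q2,
    p1 *m q1 = 1%:M /\ q1 *m p1 = 1%:M & p2 *m q2 = 1%:M /\ q2 *m p2 = 1%:M].

(* short exact sequence 0 -> U -> M -> V -> 0 of Lambda-modules
   (exactness of triples is componentwise) *)
Definition ses (k : fieldType) (U M V : lmod k) : Prop :=
  exists f1 f2 g1 g2, [/\ is_hom U M f1 f2, is_hom M V g1 g2,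
    row_free f1 /\ row_free f2, row_full g1 /\ row_full g2 &
    (f1 == kermx g1)%MS /\ (f2 == kermx g2)%MS].

Definition dsum (k : fieldType) (U V : lmod k) : lmod k :=
  LMod (block_mx (T1 U) 0 0 (T1 V)) (block_mx (T2 U) 0 0 (T2 V))
       (block_mx (hm U) 0 0 (hm V)).

Definition is_partition (a : seq nat) : bool := sorted geq a && all (fun x => 0 < x)%N a.

(* k[T]/(T^n): action of T on the basis 1, T, ..., T^(n-1) *)
Definition Jblk (k : fieldType) (n : nat) : 'M[k]_n :=
  \matrix_(i < n, j < n) ((i.+1 == j :> nat)%:R).

(* N_a = (+)_i k[T]/(T^(a_i)) *)
Fixpoint Nmat (k : fieldType) (a : seq nat) : 'M[k]_(sumn a) :=
  match a return 'M[k]_(sumn a) with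
  | [::] => 0
  | x :: r => block_mx (Jblk k x) 0 0 (Nmat k r)
  end.

Definition inS (k : fieldType) (X : lmod k) : Prop :=
  exists (a b : seq nat) (f : 'M[k]_(sumn a, sumn b)),
    [/\ is_partition a, is_partition b, X = LMod (Nmat k a) (Nmat k b) f,
        is_lmod X & row_free f].

(* X is an object of S^b_{a,c}(k): additionally Coker f ~= N_c, i.e. there is
   an exact sequence N_a --f--> N_b --g--> N_c -> 0 of k[T]-modules *)
Definition inSabc (k : fieldType) (a b c : seq nat) (X : lmod k) : Prop :=
  exists f : 'M[k]_(sumn a, sumn b),
    [/\ X = LMod (Nmat k a) (Nmat k b) f, is_lmod X, row_free f &
        exists g : 'M[k]_(sumn b, sumn c),
          [/\ Nmat k b *m g = g *m Nmat k c, row_full g & (f == kermx g)%MS]].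

(* chain of degenerations Y = M_1 ~> ... ~> M_(s+1) = Z with all M_i, U_i, V_i in P
   (indices shifted to start at 0) *)
Definition ext_chain (k : fieldType) (P : lmod k -> Prop) (Y Z : lmod k) : Prop :=
  exists (s : nat) (M U V : nat -> lmod k),
    [/\ (forall i, (i <= s)%N -> P (M i)),
        (forall i, (i < s)%N -> P (U i) /\ P (V i)),
        iso Y (M 0%N),
        (forall i, (i < s)%N -> ses (U i) (M i) (V i) /\ iso (dsum (U i) (V i)) (M i.+1)) &
        iso (M s) Z].

Definition le_ext (k : fieldType) (Y Z : lmod k) : Prop := ext_chain (@inS k) Y Z.

From mathcomp Require Import all_boot all_order all_algebra.
From mathcomp Require Import zify.
From Stdlib Require Import IndefiniteDescription.
Set Implicit Arguments. Unset Strict Implicit. Unset Printing Implicit Defensive.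
Import GRing.Theory.
Local Open Scope ring_scope.

(* Only the converse needs an argument: every term of a chain of degenerations of
   Lambda-modules from Y to Z is isomorphic to an object of S(k).  The dimension of
   the kernel of h is subadditive along short exact sequences and additive on direct
   sums, so h is injective on every term because it is on Z.  T acts nilpotently on
   Y, and nilpotency passes to submodules, quotients and direct sums, hence to every
   term.  A Lambda-module with nilpotent T-actions and injective h is isomorphic to
   some (N_a, N_b, f) in S(k) by the Jordan normal form of nilpotent matrices, which
   is obtained by lifting a basis of Jordan chains of S A to one of an A-stable S. *)

(** * Jordan form of nilpotent matrices *)

Lemma stablemx_exp_sub (k : fieldType) n p q (S : 'M[k]_(p, n)) (A : 'M[k]_n)
    (v : 'M[k]_(q, n)) i :
  stablemx S A -> (v <= S)%MS -> (v *m A ^+ i <= S)%MS.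
Proof.
move=> sSA vS; elim: i => [|i IH]; first by rewrite expr0 mulmx1.
by rewrite exprSr mulmxA (submx_trans (submxMr A IH)).
Qed.

Lemma sorted_cat_rel (T : eqType) (e : rel T) (s1 s2 : seq T) :
  sorted e s1 -> sorted e s2 -> (forall x y, x \in s1 -> y \in s2 -> e x y) ->
  sorted e (s1 ++ s2).
Proof.
case: s1 => [|x s1] //= s1_sorted s2_sorted s12; rewrite cat_path s1_sorted /=.
case: s2 s2_sorted s12 => [|y s2] //= s2_sorted s12; rewrite s2_sorted andbT.
by apply: s12; [exact: mem_last | exact: mem_head].
Qed.

Lemma sumn_map_succn (s : seq nat) : sumn (map succn s) = (sumn s + size s)%N.
Proof. by elim: s => //= x s ->; rewrite addnS addSn addnA. Qed.

Lemma map_const_nseq (T U : Type) (x : U) (s : seq T) : map (fun=> x) s = nseq (size s) x.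
Proof. by elim: s => //= y s ->. Qed.

Section NilpotentChains.
Variables (k : fieldType) (n : nat) (A : 'M[k]_n).

Definition chain_mx l (v : 'rV[k]_n) : 'M[k]_(l, n) := \matrix_(i < l) (v *m A ^+ i).

Fixpoint chains_mx (cs : seq (nat * 'rV[k]_n)) : 'M[k]_(sumn (unzip1 cs), n) :=
  match cs return 'M[k]_(sumn (unzip1 cs), n) with
  | [::] => 0
  | c :: r => col_mx (chain_mx c.1 c.2) (chains_mx r)
  end.

Fixpoint chain_ends_mx (cs : seq (nat * 'rV[k]_n)) : 'M[k]_(size cs, n) :=
  match cs return 'M[k]_(size cs, n) with
  | [::] => 0
  | c :: r => col_mx (c.2 *m A ^+ c.1.-1) (chain_ends_mx r)
  end.

Lemma mulmx_exprSr q (v : 'M[k]_(q, n)) i : v *m A ^+ i *m A = v *m A ^+ i.+1.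
Proof. by rewrite exprSr mulmxA. Qed.

Lemma mulmx_exprS q (v : 'M[k]_(q, n)) i : v *m A *m A ^+ i = v *m A ^+ i.+1.
Proof. by rewrite exprS mulmxA. Qed.

Lemma chain_mx_sub l v p (X : 'M[k]_(p, n)) :
  (forall i, (i < l)%N -> (v *m A ^+ i <= X)%MS) -> (chain_mx l v <= X)%MS.
Proof. by move=> H; apply/row_subP => i; rewrite rowK H. Qed.

Lemma sub_chain_mx l v i : (i < l)%N -> (v *m A ^+ i <= chain_mx l v)%MS.
Proof.
move=> lt_il; have -> : v *m A ^+ i = row (Ordinal lt_il) (chain_mx l v) by rewrite rowK.
exact: row_sub.
Qed.

Lemma chains_mx_sub cs p (X : 'M[k]_(p, n)) :
  (chains_mx cs <= X)%MS = all (fun c => chain_mx c.1 c.2 <= X)%MS cs.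
Proof. by elim: cs => [|c r IH] /=; rewrite ?sub0mx // col_mx_sub IH. Qed.

Lemma chain_ends_mx_sub cs p (X : 'M[k]_(p, n)) :
  (chain_ends_mx cs <= X)%MS = all (fun c => c.2 *m A ^+ c.1.-1 <= X)%MS cs.
Proof.
elim: cs => [|c r IH] /=; first by rewrite sub0mx.
by rewrite -IH; apply: (col_mx_sub (c.2 *m A ^+ c.1.-1) (chain_ends_mx r)).
Qed.

Lemma sub_chains_mx cs c : c \in cs -> (chain_mx c.1 c.2 <= chains_mx cs)%MS.
Proof. by move=> cs_c; have := submx_refl (chains_mx cs); rewrite chains_mx_sub => /allP->. Qed.

Lemma sub_chain_ends_mx cs c : c \in cs -> (c.2 *m A ^+ c.1.-1 <= chain_ends_mx cs)%MS.
Proof.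
by move=> cs_c; have := submx_refl (chain_ends_mx cs); rewrite chain_ends_mx_sub => /allP->.
Qed.

Lemma Jblk_chain_mx l v :
  v *m A ^+ l = 0 -> Jblk k l *m chain_mx l v = chain_mx l v *m A.
Proof.
move=> vAl; apply/row_matrixP => i; rewrite !row_mul rowK mulmx_exprSr mulmx_sum_row.
case: (ltnP i.+1 l) => [lt_il|le_li].
  rewrite (bigD1 (Ordinal lt_il)) //= big1 ?addr0 => [|j ij].
    by rewrite !mxE eqxx scale1r rowK.
  rewrite !mxE; case: eqP => [Eij|]; last by rewrite scale0r.
  by case/eqP: ij; apply: val_inj.
have -> : i.+1 = l by apply/eqP; rewrite eqn_leq le_li ltn_ord.
rewrite vAl big1 // => j _; rewrite !mxE; case: eqP => [Eij|]; last by rewrite scale0r.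
by have := ltn_ord j; rewrite -Eij ltnNge le_li.
Qed.

Lemma Nmat_chains_mx cs :
  all (fun c => c.2 *m A ^+ c.1 == 0) cs ->
  Nmat k (unzip1 cs) *m chains_mx cs = chains_mx cs *m A.
Proof.
elim: cs => [|c r IH] /=; first by rewrite !mul0mx.
case/andP => /eqP cA0 rA0.
by rewrite mul_block_col !mul0mx addr0 add0r Jblk_chain_mx // IH // mul_col_mx.
Qed.

Definition chain_basis p (S : 'M[k]_(p, n)) cs :=
  [/\ (chains_mx cs == S)%MS, row_free (chains_mx cs), row_free (chain_ends_mx cs),
      is_partition (unzip1 cs) & all (fun c => c.2 *m A ^+ c.1 == 0) cs].

Lemma chain_basis0 p (S : 'M[k]_(p, n)) : S = 0 -> chain_basis S [::].
Proof.
by move->; split; rewrite //= /row_free ?mxrank0 //; apply/andP; split; rewrite sub0mx.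
Qed.

Section ChainLift.
Variables (p : nat) (S : 'M[k]_(p, n)) (cs : seq (nat * 'rV[k]_n)).
Hypotheses (S_stable : stablemx S A) (cs_basis : chain_basis (S *m A) cs).

Let lift (w : 'rV[k]_n) := w *m pinvmx (S *m A) *m S.
Let K := (S :&: kermx A)%MS.
Let fresh := row_base (K :\: chain_ends_mx cs)%MS.

(* Each chain of [S A] is extended by a preimage in [S] of its start, and the
   chains are completed by length-one chains spanning a complement of their
   ends in [S :&: kermx A]. *)
Definition lifted_chains :=
  [seq (c.1.+1, lift c.2) | c <- cs] ++
  [seq (1%N, row i fresh) | i <- enum 'I_(\rank (K :\: chain_ends_mx cs))].

Let cs' := lifted_chains.

Lemma chain_basis_start c : c \in cs -> (0 < c.1)%N /\ (c.2 <= S *m A)%MS.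
Proof.
case: cs_basis => /andP[csS _] _ _ /andP[_ cs_pos] _ cs_c.
have c_pos : (0 < c.1)%N by apply: (allP cs_pos); apply: map_f.
split=> //; apply: submx_trans csS; apply: submx_trans (sub_chains_mx cs_c).
by have := sub_chain_mx c.2 c_pos; rewrite expr0 mulmx1.
Qed.

Lemma liftK w : (w <= S *m A)%MS -> lift w *m A = w.
Proof. by move=> wSA; rewrite /lift -mulmxA mulmxKpV. Qed.

Lemma lift_end c : c \in cs -> c.2 *m A ^+ c.1.-1 = lift c.2 *m A ^+ c.1.
Proof.
move=> cs_c; have [c_pos cSA] := chain_basis_start cs_c.
by rewrite -(prednK c_pos) -mulmx_exprS liftK.
Qed.

Lemma lifted_mem c : c \in cs -> (c.1.+1, lift c.2) \in cs'.
Proof. by move=> cs_c; rewrite mem_cat (map_f (fun c => (c.1.+1, lift c.2)) cs_c). Qed.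

Lemma fresh_mem i : (1%N, row i fresh) \in cs'.
Proof. by rewrite mem_cat (map_f (fun i => (1%N, row i fresh)) (mem_enum _ i)) orbT. Qed.

Lemma fresh_sub : (fresh <= K)%MS.
Proof. by rewrite eq_row_base diffmxSl. Qed.

Lemma chain_ends_sub : (chain_ends_mx cs <= K)%MS.
Proof.
rewrite chain_ends_mx_sub; apply/allP => c cs_c; have [c_pos cSA] := chain_basis_start cs_c.
rewrite sub_capmx stablemx_exp_sub ?(submx_trans cSA) //=.
case: cs_basis => _ _ _ _ /allP/(_ c cs_c)/eqP cA0.
by apply/sub_kermxP; rewrite mulmx_exprSr prednK.
Qed.

Lemma lifted_chains_sub : (chains_mx cs' <= S)%MS.
Proof.
rewrite chains_mx_sub all_cat; apply/andP; split; apply/allP => c /mapP[d _ ->];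
  apply: chain_mx_sub => i _; apply: stablemx_exp_sub => //.
  exact: submxMl.
exact: submx_trans (row_sub _ _) (submx_trans fresh_sub (capmxSl _ _)).
Qed.

Lemma sub_lifted_chains_kermx : (K <= chains_mx cs')%MS.
Proof.
rewrite -(addsmx_diff_cap_eq K (chain_ends_mx cs)) addsmx_sub; apply/andP; split.
  rewrite -(eq_row_base (K :\: _)%MS); apply/row_subP => i.
  apply: submx_trans (sub_chains_mx (fresh_mem i)).
  by have := sub_chain_mx (row i fresh) (ltn0Sn 0); rewrite expr0 mulmx1.
apply: submx_trans (capmxSr _ _) _; rewrite chain_ends_mx_sub; apply/allP => c cs_c.
by rewrite lift_end // (submx_trans (sub_chain_mx _ (ltnSn _)) (sub_chains_mx (lifted_mem cs_c))).
Qed.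

Lemma sub_lifted_chains : (S <= chains_mx cs')%MS.
Proof.
have /submxP[D SA_D] : (S *m A <= chains_mx cs' *m A)%MS.
  case: cs_basis => /andP[_ SAcs] _ _ _ _; apply: submx_trans SAcs _.
  rewrite chains_mx_sub; apply/allP => c cs_c; apply: chain_mx_sub => i lt_ic.
  have [_ cSA] := chain_basis_start cs_c.
  rewrite -(liftK cSA) mulmx_exprS -mulmx_exprSr submxMr //.
  exact: submx_trans (sub_chain_mx _ (leqW lt_ic)) (sub_chains_mx (lifted_mem cs_c)).
have -> : S = (S - D *m chains_mx cs') + D *m chains_mx cs' by rewrite subrK.
rewrite addmx_sub ?submxMl // (submx_trans _ sub_lifted_chains_kermx) // sub_capmx.
rewrite addmx_sub ?eqmx_opp ?(submx_trans (submxMl _ _) lifted_chains_sub) //=.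
by apply/sub_kermxP; rewrite mulmxBl -mulmxA -SA_D subrr.
Qed.

Lemma unzip1_lifted_chains :
  unzip1 cs' = map succn (unzip1 cs) ++ nseq (\rank (K :\: chain_ends_mx cs)) 1%N.
Proof.
rewrite /unzip1 map_cat -!map_comp; congr (_ ++ _).
by rewrite (map_const_nseq 1%N) -enumT size_enum_ord.
Qed.

Lemma lifted_chains_partition : is_partition (unzip1 cs').
Proof.
case: cs_basis => _ _ _ /andP[cs_sorted _] _.
rewrite /is_partition unzip1_lifted_chains all_cat all_map all_nseq orbT andbT.
apply/andP; split; last by apply/allP.
apply: sorted_cat_rel; first by rewrite sorted_map.
- by elim: (\rank _) => // -[|j] //= ->.
- by move=> x y /mapP[z _ ->]; rewrite mem_nseq => /andP[_ /eqP->].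
Qed.

Lemma lifted_chains_nilpotent : all (fun c => c.2 *m A ^+ c.1 == 0) cs'.
Proof.
rewrite all_cat; apply/andP; split; apply/allP => c /mapP[d cs_d ->] /=.
  case: cs_basis => _ _ _ _ /allP/(_ d cs_d)/eqP dA0.
  by rewrite -mulmx_exprS liftK ?dA0 //; case: (chain_basis_start cs_d).
rewrite expr1; apply/eqP/sub_kermxP.
exact: submx_trans (row_sub _ _) (submx_trans fresh_sub (capmxSr _ _)).
Qed.

Lemma lifted_chains_eqmx : (chains_mx cs' :=: S)%MS.
Proof. by apply/eqmxP; rewrite lifted_chains_sub sub_lifted_chains. Qed.

Lemma rank_kermx_complement :
  \rank K = (size cs + \rank (K :\: chain_ends_mx cs))%N.
Proof.
case: cs_basis => _ _ /eqP ends_free _ _.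
by rewrite -(mxrank_cap_compl K (chain_ends_mx cs)) (capmx_idPr chain_ends_sub) ends_free.
Qed.

Lemma lifted_chains_free : row_free (chains_mx cs').
Proof.
case: cs_basis => /eqmxP cs_SA /eqP cs_free _ _ _.
rewrite /row_free lifted_chains_eqmx unzip1_lifted_chains sumn_cat.
rewrite sumn_map_succn sumn_nseq mul1n -addnA size_map -rank_kermx_complement.
by rewrite -(mxrank_mul_ker S A) -cs_SA cs_free.
Qed.

Lemma lifted_chain_ends_free : row_free (chain_ends_mx cs').
Proof.
case: cs_basis => _ _ /eqP ends_free _ _.
have ends_fresh : (chain_ends_mx cs + fresh <= chain_ends_mx cs')%MS.
  rewrite addsmx_sub; apply/andP; split.
    rewrite chain_ends_mx_sub; apply/allP => c cs_c.
    by rewrite lift_end // (sub_chain_ends_mx (lifted_mem cs_c)).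
  apply/row_subP => i; have := sub_chain_ends_mx (fresh_mem i).
  by rewrite /= expr0 mulmx1.
rewrite /row_free eqn_leq rank_leq_row /= (leq_trans _ (mxrankS ends_fresh)) //.
rewrite size_cat !size_map -enumT size_enum_ord.
rewrite (adds_eqmx (eqmx_refl _) (eq_row_base _)).
by rewrite mxrank_disjoint_sum ?ends_free // capmxC capmx_diff.
Qed.

Lemma chain_basis_lift : chain_basis S cs'.
Proof.
split; rewrite ?lifted_chains_free ?lifted_chain_ends_free ?lifted_chains_partition //.
- by apply/eqmxP; exact: lifted_chains_eqmx.
- exact: lifted_chains_nilpotent.
Qed.

End ChainLift.

Lemma chain_basis_exists m p (S : 'M[k]_(p, n)) :
  stablemx S A -> S *m A ^+ m = 0 -> exists cs, chain_basis S cs.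
Proof.
elim: m p S => [|m IH] p S S_stable SAm.
  by exists [::]; apply: chain_basis0; rewrite -SAm expr0 mulmx1.
have [|cs cs_basis] := IH _ (S *m A) (submxMr A S_stable); first by rewrite mulmx_exprS.
by exists (lifted_chains S cs); apply: chain_basis_lift.
Qed.

End NilpotentChains.

Lemma nilpotent_jordan_form (k : fieldType) n (A : 'M[k]_n) m : A ^+ m = 0 ->
  exists2 a, is_partition a & exists (E : 'M[k]_(sumn a, n)) (F : 'M[k]_(n, sumn a)),
    [/\ E *m F = 1%:M, F *m E = 1%:M & Nmat k a *m E = E *m A].
Proof.
move=> Am0; have [cs [/andP[_ full] free _ cs_part cs_nil]] : exists cs, chain_basis A 1%:M cs.
  by apply: (chain_basis_exists (m := m)); rewrite ?mul1mx // submx1.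
exists (unzip1 cs) => //; exists (chains_mx A cs), (pinvmx (chains_mx A cs)).
by rewrite mulmxVp // mulVpmx ?Nmat_chains_mx // -sub1mx.
Qed.

Section InverseMatrices.
Variables (k : fieldType) (p q : nat) (P : 'M[k]_(p, q)) (Q : 'M[k]_(q, p)).
Hypotheses (PQ : P *m Q = 1%:M) (QP : Q *m P = 1%:M).

Lemma inv_mx_dim : p = q.
Proof.
have /eqP <- : row_free P by apply/row_freeP; exists Q.
by apply/eqP/row_fullP; exists Q.
Qed.

Lemma mxrank_mulmx_invr m (X : 'M[k]_(m, p)) : \rank (X *m P) = \rank X.
Proof. by rewrite mxrankMfree //; apply/row_freeP; exists Q. Qed.

Lemma mxrank_mulmx_invl m (X : 'M[k]_(q, m)) : \rank (P *m X) = \rank X.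
Proof. by rewrite eqmxMfull //; apply/row_fullP; exists Q. Qed.

End InverseMatrices.

Lemma intertwine_exp (k : fieldType) a b (A : 'M[k]_a) (B : 'M[k]_b) (P : 'M[k]_(a, b)) j :
  A *m P = P *m B -> A ^+ j *m P = P *m B ^+ j.
Proof.
move=> AP; elim: j => [|j IH]; first by rewrite !expr0 mul1mx mulmx1.
by rewrite !exprS -[A * _]/(A *m _) -[B * _]/(B *m _) -mulmxA IH !mulmxA AP.
Qed.

Lemma exp_intertw_full (k : fieldType) a b (A : 'M[k]_a) (B : 'M[k]_b) (P : 'M[k]_(a, b)) m :
  A *m P = P *m B -> row_full P -> A ^+ m = 0 -> B ^+ m = 0.
Proof.
move=> AP P_full Am0; rewrite -(mul1mx (B ^+ m)) -(mulVpmx P_full) -mulmxA.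
by rewrite -(intertwine_exp m AP) Am0 mul0mx mulmx0.
Qed.

Lemma exp_intertw_free (k : fieldType) a b (A : 'M[k]_a) (B : 'M[k]_b) (P : 'M[k]_(a, b)) m :
  A *m P = P *m B -> row_free P -> B ^+ m = 0 -> A ^+ m = 0.
Proof.
move=> AP P_free Bm0; rewrite -(mulmxKp P_free (A ^+ m)) (intertwine_exp m AP) Bm0.
by rewrite mulmx0 mul0mx.
Qed.

Lemma mul_block_diag_mx (k : fieldType) m1 m2 n1 n2 p1 p2 (A : 'M[k]_(m1, n1))
    (B : 'M[k]_(m2, n2)) (C : 'M[k]_(n1, p1)) (D : 'M[k]_(n2, p2)) :
  block_mx A 0 0 B *m block_mx C 0 0 D = block_mx (A *m C) 0 0 (B *m D).
Proof. by rewrite mulmx_block !mulmx0 !mul0mx !addr0 !add0r. Qed.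

Lemma exp_block_diag (k : fieldType) m1 m2 (A : 'M[k]_m1) (B : 'M[k]_m2) j :
  block_mx A 0 0 B ^+ j = block_mx (A ^+ j) 0 0 (B ^+ j).
Proof.
elim: j => [|j IH]; first by rewrite !expr0 -scalar_mx_block.
by rewrite !exprS IH; apply: mul_block_diag_mx.
Qed.

Lemma Jblk_exp (k : fieldType) l j :
  Jblk k l ^+ j = \matrix_(i < l, i' < l) ((i + j)%N == i')%:R.
Proof.
elim: j => [|j IH]; first by apply/matrixP => i i'; rewrite expr0 !mxE addn0.
rewrite exprSr IH; apply/matrixP => i i'; rewrite !mxE.
case: (ltnP (i + j) l) => [lt_ijl|le_lij].
  rewrite (bigD1 (Ordinal lt_ijl)) //= big1 ?addr0 => [|t t_ij].
    by rewrite !mxE eqxx mul1r addnS.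
  rewrite !mxE; case: eqP => [Eij|]; last by rewrite mul0r.
  by case/eqP: t_ij; apply: val_inj.
rewrite big1 => [|t _]; first by case: eqP => // Eij; have := ltn_ord i'; lia.
by rewrite !mxE; case: eqP => [Eij|]; rewrite ?mul0r //; have := ltn_ord t; lia.
Qed.

Lemma Nmat_nilpotent (k : fieldType) a j : (sumn a <= j)%N -> Nmat k a ^+ j = 0.
Proof.
elim: a => [|x a IH] /= le_aj; first by apply/matrixP => -[].
rewrite exp_block_diag IH; last by apply: leq_trans le_aj; rewrite leq_addl.
have -> : Jblk k x ^+ j = 0.
  by apply/matrixP => i i'; rewrite Jblk_exp !mxE; case: eqP => // Eij; have := ltn_ord i'; lia.
by rewrite block_mx0.
Qed.

(** * Lambda-modules *)

Lemma exact_conj (k : fieldType) a b c a' b' c' (f : 'M[k]_(a, b)) (g : 'M[k]_(b, c))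
    (pa : 'M[k]_(a, a')) qa (pb : 'M[k]_(b, b')) qb (pc : 'M[k]_(c, c')) qc :
  pa *m qa = 1%:M -> qa *m pa = 1%:M -> pb *m qb = 1%:M -> qb *m pb = 1%:M ->
  pc *m qc = 1%:M -> qc *m pc = 1%:M ->
  row_free f -> row_full g -> (f == kermx g)%MS ->
  [/\ row_free (qa *m f *m pb), row_full (qb *m g *m pc) &
      (qa *m f *m pb == kermx (qb *m g *m pc))%MS].
Proof.
move=> pqa qpa pqb qpb pqc qpc f_free g_full /andP[f_ker ker_f].
split.
- by rewrite /row_free (mxrank_mulmx_invr pqb) (mxrank_mulmx_invl pqa) -(inv_mx_dim pqa qpa).
- by rewrite /row_full (mxrank_mulmx_invr pqc) (mxrank_mulmx_invl pqb) -(inv_mx_dim pqc qpc).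
apply/andP; split.
  apply/sub_kermxP; have /sub_kermxP fg0 := f_ker.
  by rewrite -!mulmxA (mulmxA pb) pqb mul1mx (mulmxA f) fg0 mul0mx mulmx0.
set W := kermx _.
have Wg0 : W *m qb *m g = 0.
  have WK : W *m (qb *m g *m pc) = 0 := mulmx_ker _.
  by rewrite -(mulmx1 (W *m qb *m g)) -pqc mulmxA -(mulmxA W qb g) -(mulmxA W) WK mul0mx.
have /submxP [D WD] : (W *m qb <= f)%MS by apply: submx_trans ker_f; apply/sub_kermxP.
have -> : W = D *m pa *m (qa *m f *m pb).
  by rewrite -(mulmx1 W) -qpb mulmxA WD !mulmxA -(mulmxA D pa qa) pqa mulmx1.
exact: submxMl.
Qed.

Section LambdaModules.
Variable k : fieldType.
Implicit Types X Y Z U V M : lmod k.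

Lemma is_hom_comp X Y Z a1 a2 b1 b2 :
  is_hom X Y a1 a2 -> is_hom Y Z b1 b2 -> is_hom X Z (a1 *m b1) (a2 *m b2).
Proof.
case=> a1T a2T ah [b1T b2T bh]; split; rewrite mulmxA.
- by rewrite a1T -mulmxA b1T mulmxA.
- by rewrite a2T -mulmxA b2T mulmxA.
- by rewrite ah -mulmxA bh mulmxA.
Qed.

Lemma iso_refl X : iso X X.
Proof.
by exists 1%:M, 1%:M, 1%:M, 1%:M; split; rewrite ?mulmx1 //; split; rewrite ?mulmx1 ?mul1mx.
Qed.

Lemma iso_sym X Y : iso X Y -> iso Y X.
Proof. by case=> p1 [p2 [q1 [q2 [pH qH [pq1 qp1] [pq2 qp2]]]]]; exists q1, q2, p1, p2. Qed.

Lemma iso_trans X Y Z : iso X Y -> iso Y Z -> iso X Z.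
Proof.
case=> p1 [p2 [q1 [q2 [pH qH [pq1 qp1] [pq2 qp2]]]]].
case=> p1' [p2' [q1' [q2' [pH' qH' [pq1' qp1'] [pq2' qp2']]]]].
exists (p1 *m p1'), (p2 *m p2'), (q1' *m q1), (q2' *m q2).
split; [exact: is_hom_comp pH pH' | exact: is_hom_comp qH' qH | split | split].
- by rewrite mulmxA -(mulmxA p1) pq1' mulmx1.
- by rewrite mulmxA -(mulmxA q1') qp1 mulmx1.
- by rewrite mulmxA -(mulmxA p2) pq2' mulmx1.
- by rewrite mulmxA -(mulmxA q2') qp2 mulmx1.
Qed.

Lemma iso_dsum U U' V V' : iso U U' -> iso V V' -> iso (dsum U V) (dsum U' V').
Proof.
case=> p1 [p2 [q1 [q2 [[pT1 pT2 ph] [qT1 qT2 qh] [pq1 qp1] [pq2 qp2]]]]].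
case=> p1' [p2' [q1' [q2' [[pT1' pT2' ph'] [qT1' qT2' qh'] [pq1' qp1'] [pq2' qp2']]]]].
exists (block_mx p1 0 0 p1'), (block_mx p2 0 0 p2'), (block_mx q1 0 0 q1'),
  (block_mx q2 0 0 q2').
by split; split; rewrite /= !mul_block_diag_mx ?pT1 ?pT1' ?pT2 ?pT2' ?ph ?ph'
  ?qT1 ?qT1' ?qT2 ?qT2' ?qh ?qh' ?pq1 ?pq1' ?qp1 ?qp1' ?pq2 ?pq2' ?qp2 ?qp2' -?scalar_mx_block.
Qed.

Lemma ses_iso U M V U' M' V' :
  ses U M V -> iso U U' -> iso M M' -> iso V V' -> ses U' M' V'.
Proof.
case=> f1 [f2 [g1 [g2 [fH gH [f1_free f2_free] [g1_full g2_full] [ker1 ker2]]]]].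
case=> pU1 [pU2 [qU1 [qU2 [pUH qUH [u1 u2] [u3 u4]]]]].
case=> pM1 [pM2 [qM1 [qM2 [pMH qMH [m1 m2] [m3 m4]]]]].
case=> pV1 [pV2 [qV1 [qV2 [pVH qVH [v1 v2] [v3 v4]]]]].
have [free1 full1 exact1] := exact_conj u1 u2 m1 m2 v1 v2 f1_free g1_full ker1.
have [free2 full2 exact2] := exact_conj u3 u4 m3 m4 v3 v4 f2_free g2_full ker2.
exists (qU1 *m f1 *m pM1), (qU2 *m f2 *m pM2), (qM1 *m g1 *m pV1), (qM2 *m g2 *m pV2).
by split=> //; apply: is_hom_comp (is_hom_comp _ _) _.
Qed.

Definition nilpotent_lmod X := exists m, T1 X ^+ m = 0 /\ T2 X ^+ m = 0.

Lemma nilpotent_iso X Y : iso X Y -> nilpotent_lmod X -> nilpotent_lmod Y.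
Proof.
case=> p1 [p2 [q1 [q2 [[pT1 pT2 _] _ [_ qp1] [_ qp2]]]]] [m [T1m T2m]].
have p1_full : row_full p1 by apply/row_fullP; exists q1.
have p2_full : row_full p2 by apply/row_fullP; exists q2.
exists m; split.
  exact: exp_intertw_full pT1 p1_full T1m.
exact: exp_intertw_full pT2 p2_full T2m.
Qed.

Lemma nilpotent_ses U M V :
  ses U M V -> nilpotent_lmod M -> nilpotent_lmod U /\ nilpotent_lmod V.
Proof.
case=> f1 [f2 [g1 [g2 [[fT1 fT2 _] [gT1 gT2 _] [f1_free f2_free] [g1_full g2_full] _]]]].
case=> m [T1m T2m]; split; exists m; split.
- exact: exp_intertw_free fT1 f1_free T1m.
- exact: exp_intertw_free fT2 f2_free T2m.
- exact: exp_intertw_full gT1 g1_full T1m.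
- exact: exp_intertw_full gT2 g2_full T2m.
Qed.

Lemma nilpotent_dsum U V :
  nilpotent_lmod U -> nilpotent_lmod V -> nilpotent_lmod (dsum U V).
Proof.
have exp0 a (A : 'M[k]_a) m j : A ^+ m = 0 -> (m <= j)%N -> A ^+ j = 0.
  by move=> Am0 /subnK <-; rewrite exprD Am0 mulr0.
case=> m [U1 U2] [m' [V1 V2]]; exists (m + m')%N; rewrite /= !exp_block_diag.
have [le_m le_m'] : (m <= m + m')%N /\ (m' <= m + m')%N by rewrite leq_addr leq_addl.
by rewrite (exp0 _ _ _ _ U1) ?(exp0 _ _ _ _ U2) ?(exp0 _ _ _ _ V1) ?(exp0 _ _ _ _ V2) ?block_mx0.
Qed.

Definition kerdim X := \rank (kermx (hm X)).

Lemma kerdim_eq0 X : (kerdim X == 0%N) = row_free (hm X).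
Proof. by rewrite /kerdim mxrank_ker /row_free subn_eq0 eqn_leq rank_leq_row. Qed.

Lemma kerdim_iso X Y : iso X Y -> kerdim X = kerdim Y.
Proof.
case=> p1 [p2 [q1 [q2 [[_ _ ph] _ [pq1 qp1] [pq2 qp2]]]]].
have hY : hm Y = q1 *m hm X *m p2 by rewrite -mulmxA ph mulmxA qp1 mul1mx.
rewrite /kerdim !mxrank_ker hY (mxrank_mulmx_invr pq2) (mxrank_mulmx_invl pq1).
by congr (_ - _)%N; apply: inv_mx_dim pq1 qp1.
Qed.

Lemma kerdim_dsum U V : kerdim (dsum U V) = (kerdim U + kerdim V)%N.
Proof.
rewrite /kerdim !mxrank_ker /= rank_diag_block_mx.
by have := rank_leq_row (hm U); have := rank_leq_row (hm V); lia.
Qed.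

(* The kernel of [h_M] maps under [g] into the kernel of [h_V]; what [g] kills
   lies in the image of [f], and there it comes from the kernel of [h_U]. *)
Lemma kerdim_ses U M V : ses U M V -> (kerdim M <= kerdim U + kerdim V)%N.
Proof.
case=> f1 [f2 [g1 [g2 [[_ _ fh] [_ _ gh] [_ f2_free] _ [/andP[_ ker_f1] _]]]]].
rewrite /kerdim -(mxrank_mul_ker (kermx (hm M)) g1) addnC; apply: leq_add.
  set W := (kermx (hm M) :&: kermx g1)%MS.
  have /submxP[D WD] : (W <= f1)%MS by apply: submx_trans ker_f1; exact: capmxSr.
  have Dh0 : D *m hm U *m f2 = 0.
    by rewrite -mulmxA fh mulmxA -WD; apply/sub_kermxP; exact: capmxSl.
  have D_ker : (D <= kermx (hm U))%MS.
    by apply/sub_kermxP; apply/eqP; rewrite -(mulmx_free_eq0 _ f2_free) Dh0.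
  by rewrite WD (leq_trans (mxrankM_maxl _ _) (mxrankS D_ker)).
apply: mxrankS; apply/sub_kermxP.
by rewrite -mulmxA -gh mulmxA mulmx_ker mul0mx.
Qed.

Definition nil_mono_lmod X := [/\ is_lmod X, nilpotent_lmod X & row_free (hm X)].

Lemma nil_mono_lmod_iso_inS X : nil_mono_lmod X -> exists2 X', inS X' & iso X X'.
Proof.
case=> X_lmod [m [T1m T2m]] h_free.
have [a a_part [E1 [F1 [EF1 FE1 E1T]]]] := nilpotent_jordan_form T1m.
have [b b_part [E2 [F2 [EF2 FE2 E2T]]]] := nilpotent_jordan_form T2m.
have F1T : T1 X *m F1 = F1 *m Nmat k a.
  by rewrite -[RHS]mulmx1 -EF1 mulmxA -(mulmxA F1) E1T mulmxA FE1 mul1mx.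
have F2T : T2 X *m F2 = F2 *m Nmat k b.
  by rewrite -[RHS]mulmx1 -EF2 mulmxA -(mulmxA F2) E2T mulmxA FE2 mul1mx.
set f := E1 *m hm X *m F2.
exists (LMod (Nmat k a) (Nmat k b) f).
  exists a, b, f; split => //.
    rewrite /is_lmod /= /f !mulmxA E1T -!mulmxA; congr (_ *m _).
    by rewrite mulmxA X_lmod -F2T mulmxA.
  rewrite /row_free /f (mxrank_mulmx_invr FE2) (mxrank_mulmx_invl FE1) (eqP h_free).
  by rewrite (inv_mx_dim EF1 FE1).
exists F1, F2, E1, E2; split=> //; split=> //=.
- by rewrite /f !mulmxA FE1 mul1mx.
- by rewrite /f -mulmxA FE2 mulmx1.
Qed.

Lemma inS_lmod X : inS X -> is_lmod X.
Proof. by case=> a [b [f [_ _ _ ?]]]. Qed.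

Lemma inSabc_nilpotent a b c X : inSabc a b c X -> nilpotent_lmod X.
Proof.
case=> f [-> _ _ _]; exists (sumn a + sumn b)%N.
by rewrite /= !Nmat_nilpotent ?leq_addr ?leq_addl.
Qed.

Lemma inSabc_row_free a b c X : inSabc a b c X -> row_free (hm X).
Proof. by case=> f [-> _ ? _]. Qed.

End LambdaModules.

(** * Chains of degenerations *)

Section DegenerationChains.
Variables (k : fieldType) (s : nat) (M U V : nat -> lmod k).
Hypothesis chain_step :
  forall i, (i < s)%N -> ses (U i) (M i) (V i) /\ iso (dsum (U i) (V i)) (M i.+1).

Lemma chain_nilpotent :
  nilpotent_lmod (M 0) -> forall i, (i <= s)%N -> nilpotent_lmod (M i).
Proof.
move=> nM0; elim=> // i IH lt_is; have [ses_i iso_i] := chain_step lt_is.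
have [nU nV] := nilpotent_ses ses_i (IH (ltnW lt_is)).
exact: nilpotent_iso iso_i (nilpotent_dsum nU nV).
Qed.

(* Vanishing propagates backwards: [kerdim] is subadditive along short exact
   sequences and additive on direct sums. *)
Lemma chain_kerdim0 :
  kerdim (M s) = 0%N -> forall i, (i <= s)%N -> kerdim (M i) = 0%N.
Proof.
move=> kMs; suff kM j : (j <= s)%N -> kerdim (M (s - j)) = 0%N.
  by move=> i le_is; rewrite -(subKn le_is) kM ?leq_subr.
elim: j => [|j IH] le_js; first by rewrite subn0.
have lt_s : (s - j.+1 < s)%N by lia.
have [ses_j iso_j] := chain_step lt_s.
have := kerdim_ses ses_j; rewrite -kerdim_dsum (kerdim_iso iso_j).
have -> : (s - j.+1).+1 = (s - j)%N by lia.
rewrite IH; [by rewrite leqn0 => /eqP | exact: ltnW].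
Qed.

End DegenerationChains.

Section ExtChainTransport.
Variable k : fieldType.
Implicit Types (P Q : lmod k -> Prop) (X Y Z : lmod k).

Lemma ext_chain_nil_mono Y Z :
  nilpotent_lmod Y -> row_free (hm Z) ->
  ext_chain (@is_lmod k) Y Z -> ext_chain (@nil_mono_lmod k) Y Z.
Proof.
move=> nY hZ_free [s [M [U [V [M_lmod UV_lmod YM step MZ]]]]].
have nM := chain_nilpotent step (nilpotent_iso YM nY).
have kM : forall i, (i <= s)%N -> kerdim (M i) = 0%N.
  by apply: chain_kerdim0 step _; rewrite (kerdim_iso MZ); apply/eqP; rewrite kerdim_eq0.
exists s, M, U, V; split=> // [i le_is | i lt_is].
  by split; [exact: M_lmod | exact: nM | rewrite -kerdim_eq0 kM].
have [ses_i iso_i] := step i lt_is; have [U_lmod V_lmod] := UV_lmod i lt_is.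
have [nU nV] := nilpotent_ses ses_i (nM i (ltnW lt_is)).
have /eqP := kM i.+1 lt_is; rewrite -(kerdim_iso iso_i) kerdim_dsum addn_eq0.
by case/andP; rewrite !kerdim_eq0 => hU hV; split; split.
Qed.

Lemma iso_replace_family P Q (b : pred nat) (X : nat -> lmod k) :
  (forall X, P X -> exists2 X', Q X' & iso X X') -> (forall i, b i -> P (X i)) ->
  exists X' : nat -> lmod k, forall i, b i -> Q (X' i) /\ iso (X i) (X' i).
Proof.
move=> PQ bP; have pick i : exists Xi, b i -> Q Xi /\ iso (X i) Xi.
  case: (boolP (b i)) => [/bP/PQ[Xi QXi XXi] | _]; first by exists Xi.
  by exists (X i).
exists (fun i => proj1_sig (constructive_indefinite_description _ (pick i))).
by move=> i; case: constructive_indefinite_description.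
Qed.

Lemma ext_chain_iso_replace P Q Y Z :
  (forall X, P X -> exists2 X', Q X' & iso X X') -> ext_chain P Y Z -> ext_chain Q Y Z.
Proof.
move=> PQ [s [M [U [V [PM PUV YM step MZ]]]]].
have [M' MM'] := @iso_replace_family P Q (fun i => i <= s)%N M PQ PM.
have [U' UU'] := @iso_replace_family P Q (fun i => i < s)%N U PQ
  (fun i lt_is => (PUV i lt_is).1).
have [V' VV'] := @iso_replace_family P Q (fun i => i < s)%N V PQ
  (fun i lt_is => (PUV i lt_is).2).
exists s, M', U', V'; split=> [i /MM'[] | i lt_is | | i lt_is |] //.
- by split; [case: (UU' i lt_is) | case: (VV' i lt_is)].
- exact: iso_trans YM (MM' 0%N isT).2.
- have [ses_i iso_i] := step i lt_is.
  have [_ iU] := UU' i lt_is; have [_ iV] := VV' i lt_is.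
  split; first exact: ses_iso ses_i iU (MM' i (ltnW lt_is)).2 iV.
  exact: iso_trans (iso_sym (iso_dsum iU iV)) (iso_trans iso_i (MM' i.+1 lt_is).2).
- exact: iso_trans (iso_sym (MM' s (leqnn s)).2) MZ.
Qed.

Lemma ext_chain_weaken P Q Y Z :
  (forall X, P X -> Q X) -> ext_chain P Y Z -> ext_chain Q Y Z.
Proof. by move=> PQ; apply: ext_chain_iso_replace => X /PQ QX; exists X; last exact: iso_refl. Qed.

End ExtChainTransport.

Unset Implicit Arguments. Set Strict Implicit.
Local Close Scope ring_scope.

Theorem lemma3p1 (k : fieldType) (a b c : seq nat) (Y Z : lmod k) :
  is_partition a -> is_partition b -> is_partition c ->
  inSabc a b c Y -> inSabc a b c Z ->
  (le_ext Y Z <-> ext_chain (@is_lmod k) Y Z).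
Proof.
move=> _ _ _ Y_abc Z_abc; split; first exact: ext_chain_weaken (@inS_lmod k).
move/(ext_chain_nil_mono (inSabc_nilpotent Y_abc) (inSabc_row_free Z_abc)).
exact: ext_chain_iso_replace (@nil_mono_lmod_iso_inS k).
Qed.
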